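(* Let $f:\mathbb{R}^d\to\mathbb{R}$ be bounded below by $f^*$ (i.e. $f(x)\ge f^*$ for all $x$) and smooth with non-negative constants $L_1,\dots,L_d$, i.e. $$f(y)\le f(x)+\langle\nabla f(x),y-x\rangle+\sum_{i=1}^d\frac{L_i}{2}(y_i-x_i)^2\quad\text{for all }x,y\in\mathbb{R}^d,$$ and let $\bar L:=\frac1d\sum_{i=1}^d L_i$. Suppose the Success Probability Bounds (SPB) assumption holds. Consider single-node signSGD with Option 1: starting from $x_0\in\mathbb{R}^d$, $x_{k+1}=x_k-\gamma_k\,\mathrm{sign}\,\hat g(x_k)$, where at each iteration $\hat g(x_k)$ is a fresh draw of the estimator at the current point $x_k$. (a) If $\gamma_k=\gamma_0/\sqrt{k+1}$ with $\gamma_0>0$, then for every integer $K\ge 2$, $$\min_{0\le k<K}\mathbb{E}\|\nabla f(x_k)\|_\rho\le\frac{f(x_0)-f^*}{\gamma_0\sqrt K}+\frac{3\gamma_0 d\bar L}{2}\frac{\log K}{\sqrt K}$$ ($\log$ is the natural logarithm). (b) If $\gamma_k\equiv\gamma>0$, then for every $K\ge1$, $$\frac1K\sum_{k=0}^{K-1}\mathbb{E}\|\nabla f(x_k)\|_\rho\le\frac{f(x_0)-f^*}{\gamma K}+\frac{\gamma d\bar L}{2}.$$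
   Context: Notation: $g(x):=\nabla f(x)$. For $t\in\mathbb{R}$, $\mathrm{sign}\,t=1$ if $t>0$, $0$ if $t=0$, $-1$ if $t<0$; for vectors sign is applied entrywise. SPB assumption: for every $x\in\mathbb{R}^d$ one has access to an independent (not necessarily unbiased) random estimator $\hat g(x)\in\mathbb{R}^d$ of $g(x)$ such that for every $i\in\{1,\dots,d\}$ with $g_i(x)\neq0$, the success probability $\rho_i(x):=\mathrm{Prob}(\mathrm{sign}\,\hat g_i(x)=\mathrm{sign}\,g_i(x))$ satisfies $\rho_i(x)>\tfrac12$. The $\rho$-norm is $\|g(x)\|_\rho:=\sum_{i=1}^d(2\rho_i(x)-1)|g_i(x)|$ (terms with $g_i(x)=0$ vanish). Expectations are over all randomness of the algorithm. *)

From Stdlib Require Import Reals Lra Lia List.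
Open Scope R_scope.

(* Vectors of R^d are represented as  nat -> R ; only indices i < d matter. *)
Definition vec := nat -> R.

Fixpoint fsum (n : nat) (F : nat -> R) : R :=
  match n with
  | O => 0
  | S m => fsum m F + F m
  end.

Fixpoint Rmin_upto (n : nat) (F : nat -> R) : R :=
  match n with
  | O => F O
  | S m => Rmin (Rmin_upto m F) (F (S m))
  end.

Definition sign (t : R) : R :=
  match total_order_T t 0 with
  | inleft (left _) => -1
  | inleft (right _) => 0
  | inright _ => 1
  end.

Definition upd (x : vec) (i : nat) (v : R) : vec :=
  fun j => if Nat.eqb j i then v else x j.

(* Enumeration (without repetition) of all sign vectors in {-1,0,1}^d,
   represented as vectors that vanish at indices >= d. *)
Fixpoint signvecs (d : nat) : list vec :=
  match d with
  | O => (fun _ => 0) :: nil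
  | S n => flat_map (fun s => map (fun v => upd s n v) ((-1) :: 0 :: 1 :: nil))
                    (signvecs n)
  end.

Definition lsum (l : list vec) (F : vec -> R) : R :=
  fold_right (fun s acc => F s + acc) 0 l.

(* A law of the sign of the estimator at x:  p x s = Prob(sign ghat(x) = s). *)
Definition sign_law (d : nat) (p : vec -> vec -> R) : Prop :=
  (forall x s, 0 <= p x s) /\ (forall x, lsum (signvecs d) (p x) = 1).

Definition rho (d : nat) (p : vec -> vec -> R) (g : vec -> vec) (x : vec) (i : nat) : R :=
  lsum (signvecs d) (fun s => if Req_EM_T (s i) (sign (g x i)) then p x s else 0).

Definition SPB (d : nat) (p : vec -> vec -> R) (g : vec -> vec) : Prop :=
  forall x i, (i < d)%nat -> g x i <> 0 -> rho d p g x i > 1/2.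

Definition rho_norm (d : nat) (p : vec -> vec -> R) (g : vec -> vec) (x : vec) : R :=
  fsum d (fun i => (2 * rho d p g x i - 1) * Rabs (g x i)).

(* Eiter d p gamma j k x h = E[ h(x_{j+k}) | x_j = x ] for the signSGD chain
   x_{m+1} = x_m - gamma_m * sign ghat(x_m), with fresh independent draws. *)
Fixpoint Eiter (d : nat) (p : vec -> vec -> R) (gamma : nat -> R)
         (j k : nat) (x : vec) (h : vec -> R) : R :=
  match k with
  | O => h x
  | S k' => lsum (signvecs d)
              (fun s => p x s * Eiter d p gamma (S j) k' (fun i => x i - gamma j * s i) h)
  end.

Definition Egrad (d : nat) (p : vec -> vec -> R) (g : vec -> vec) (gamma : nat -> R)
           (x0 : vec) (k : nat) : R :=
  Eiter d p gamma 0 k x0 (rho_norm d p g).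

(* Averaging over one step of signSGD, the smoothness inequality applied at
   x_k with y = x_k - gamma_k s gives
     E[f(x_{k+1}) | x_k] <= f(x_k) - gamma_k <g(x_k), E[s]> + gamma_k^2 sum_i L_i / 2,
   and for every coordinate g_i E[s_i] >= (2 rho_i - 1) |g_i|, because
   g_i s_i >= |g_i| when s_i = sign g_i and g_i s_i >= -|g_i| otherwise.
   Taking full expectations and telescoping over k < K, with f >= f^*, yields
     sum_k gamma_k E||g(x_k)||_rho <= f(x_0) - f^* + (sum_i L_i / 2) sum_k gamma_k^2.
   For constant steps this is (b); for gamma_k = gamma_0 / sqrt(k+1) one has
   sum_k gamma_k >= gamma_0 sqrt K and sum_k gamma_k^2 <= gamma_0^2 (1 + ln K)
   <= 3 gamma_0^2 ln K, and the minimum is bounded by the weighted average. *)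

From Stdlib Require Import Reals Lra Lia List.
Open Scope R_scope.

Lemma lsum_ext (l : list vec) F G :
  (forall s, In s l -> F s = G s) -> lsum l F = lsum l G.
Proof. induction l; simpl; intros H; auto. rewrite H, IHl; auto. Qed.

Lemma lsum_le (l : list vec) F G :
  (forall s, In s l -> F s <= G s) -> lsum l F <= lsum l G.
Proof.
  induction l as [|a l IHl]; simpl; intros H; [lra|].
  assert (lsum l F <= lsum l G) by auto.
  specialize (H a (or_introl eq_refl)); lra.
Qed.

Lemma lsum_plus (l : list vec) F G :
  lsum l (fun s => F s + G s) = lsum l F + lsum l G.
Proof. induction l; simpl; [ring|]. rewrite IHl; ring. Qed.

Lemma lsum_scal (l : list vec) a F : lsum l (fun s => a * F s) = a * lsum l F.
Proof. induction l; simpl; [ring|]. rewrite IHl; ring. Qed.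

Lemma fsum_ext n F G : (forall i, (i < n)%nat -> F i = G i) -> fsum n F = fsum n G.
Proof. induction n; simpl; intros H; auto. rewrite H, IHn; auto. Qed.

Lemma fsum_le n F G : (forall i, (i < n)%nat -> F i <= G i) -> fsum n F <= fsum n G.
Proof.
  induction n; simpl; intros H; [lra|].
  assert (fsum n F <= fsum n G) by auto.
  specialize (H n (Nat.lt_succ_diag_r n)); lra.
Qed.

Lemma fsum_scal n a F : fsum n (fun i => a * F i) = a * fsum n F.
Proof. induction n; simpl; [ring|]. rewrite IHn; ring. Qed.

Lemma fsum_const n c : fsum n (fun _ => c) = INR n * c.
Proof. induction n; simpl fsum; [simpl; ring|]. rewrite IHn, S_INR; ring. Qed.

Lemma lsum_fsum (l : list vec) n (F : vec -> nat -> R) :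
  lsum l (fun s => fsum n (F s)) = fsum n (fun i => lsum l (fun s => F s i)).
Proof.
  induction n; simpl.
  - induction l; simpl; [ring|]. rewrite IHl; ring.
  - rewrite lsum_plus, IHn; reflexivity.
Qed.

Lemma INR_mul_mean n F : INR n * (/ INR n * fsum n F) = fsum n F.
Proof.
  destruct n as [|n]; [simpl; ring|].
  field; apply not_0_INR; discriminate.
Qed.

Lemma Rmin_upto_le n F k : (k <= n)%nat -> Rmin_upto n F <= F k.
Proof.
  induction n; intros Hk; simpl.
  - replace k with 0%nat by lia; lra.
  - destruct (Nat.eq_dec k (S n)) as [->|Hne]; [apply Rmin_r|].
    eapply Rle_trans; [apply Rmin_l|]. apply IHn; lia.
Qed.

Lemma Rmin_upto_mul_sum_le K (w F : nat -> R) :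
  (forall k, 0 <= w k) ->
  Rmin_upto (K - 1) F * fsum K w <= fsum K (fun k => w k * F k).
Proof.
  intros Hw. rewrite <- fsum_scal.
  apply fsum_le; intros k Hk. rewrite Rmult_comm. apply Rmult_le_compat_l; auto.
  apply Rmin_upto_le; lia.
Qed.

Lemma Rle_div_of_mul_le m a b N :
  0 <= N -> 0 < a -> a <= b -> m * b <= N -> m <= N / a.
Proof.
  intros HN Ha Hab Hm.
  destruct (Rle_or_lt m 0) as [Hm0|Hm0].
  - apply Rle_trans with 0; [lra|].
    unfold Rdiv; apply Rmult_le_pos; [lra|left; apply Rinv_0_lt_compat; lra].
  - apply Rmult_le_reg_r with a; [lra|].
    unfold Rdiv; rewrite Rmult_assoc, Rinv_l, Rmult_1_r; nra.
Qed.

Lemma sign_pos t : 0 < t -> sign t = 1.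
Proof. unfold sign; destruct (total_order_T t 0) as [[|]|]; lra. Qed.

Lemma sign_neg t : t < 0 -> sign t = -1.
Proof. unfold sign; destruct (total_order_T t 0) as [[|]|]; lra. Qed.

Lemma signvecs_vals d s :
  In s (signvecs d) -> forall i, s i = -1 \/ s i = 0 \/ s i = 1.
Proof.
  revert s; induction d; simpl; intros s Hs i.
  - destruct Hs as [<-|[]]; auto.
  - apply in_flat_map in Hs; destruct Hs as [s' [Hs' Hm]].
    unfold upd in Hm; simpl in Hm.
    destruct Hm as [<-|[<-|[<-|[]]]];
      (destruct (Nat.eqb i d); [auto|apply IHd; auto]).
Qed.

Lemma sign_agreement_le t u : u = -1 \/ u = 0 \/ u = 1 ->
  Rabs t * (2 * (if Req_EM_T u (sign t) then 1 else 0) - 1) <= t * u.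
Proof.
  intros Hu.
  destruct (Rtotal_order t 0) as [Ht|[->|Ht]].
  - rewrite sign_neg, Rabs_left by lra.
    destruct (Req_EM_T u (-1)); destruct Hu as [-> | [-> | ->]]; lra.
  - rewrite Rabs_R0; lra.
  - rewrite sign_pos, Rabs_right by lra.
    destruct (Req_EM_T u 1); destruct Hu as [-> | [-> | ->]]; lra.
Qed.

Section SignExpectation.

Variables (d : nat) (p : vec -> vec -> R).
Hypothesis Hlaw : sign_law d p.

Lemma rho_term_eq g x i :
  (2 * rho d p g x i - 1) * Rabs (g x i) =
  lsum (signvecs d) (fun s =>
    p x s * (Rabs (g x i) * (2 * (if Req_EM_T (s i) (sign (g x i)) then 1 else 0) - 1))).
Proof.
  destruct Hlaw as [_ Htot].
  transitivity (lsum (signvecs d) (fun s =>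
    2 * Rabs (g x i) * (if Req_EM_T (s i) (sign (g x i)) then p x s else 0)
    + - Rabs (g x i) * p x s)).
  - rewrite lsum_plus, !lsum_scal, Htot; unfold rho; ring.
  - apply lsum_ext; intros s _; destruct Req_EM_T; ring.
Qed.

Lemma rho_norm_le_mean_inner g x :
  rho_norm d p g x <=
  lsum (signvecs d) (fun s => p x s * fsum d (fun i => g x i * s i)).
Proof.
  apply Rle_trans with
    (fsum d (fun i => lsum (signvecs d) (fun s => p x s * (g x i * s i)))).
  - apply fsum_le; intros i _. rewrite rho_term_eq.
    apply lsum_le; intros s Hs. apply Rmult_le_compat_l; [apply Hlaw|].
    apply sign_agreement_le, signvecs_vals with d; exact Hs.
  - right. rewrite <- lsum_fsum.
    apply lsum_ext; intros s _. rewrite <- fsum_scal; reflexivity.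
Qed.

Variable gamma : nat -> R.

Lemma Eiter_tower k : forall j x h,
  Eiter d p gamma j (S k) x h =
  Eiter d p gamma j k x (fun y => Eiter d p gamma (j + k) 1 y h).
Proof.
  induction k; intros j x h.
  - simpl Eiter at 2; rewrite Nat.add_0_r; reflexivity.
  - change (Eiter d p gamma j (S (S k)) x h) with
      (lsum (signvecs d) (fun s =>
        p x s * Eiter d p gamma (S j) (S k) (fun i => x i - gamma j * s i) h)).
    simpl Eiter at 2. apply lsum_ext; intros s _.
    rewrite IHk, Nat.add_succ_comm; reflexivity.
Qed.

Lemma Eiter_mono k : forall j x h1 h2, (forall y, h1 y <= h2 y) ->
  Eiter d p gamma j k x h1 <= Eiter d p gamma j k x h2.
Proof.
  induction k; intros j x h1 h2 H; simpl; auto.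
  apply lsum_le; intros s _. apply Rmult_le_compat_l; [apply Hlaw|auto].
Qed.

Lemma Eiter_const k : forall j x c, Eiter d p gamma j k x (fun _ => c) = c.
Proof.
  destruct Hlaw as [_ Htot].
  induction k; intros j x c; simpl; auto.
  transitivity (lsum (signvecs d) (fun s => c * p x s)).
  - apply lsum_ext; intros s _; rewrite IHk; ring.
  - rewrite lsum_scal, Htot; ring.
Qed.

Lemma Eiter_affine k : forall j x a c h1 h2,
  Eiter d p gamma j k x (fun y => h1 y - a * h2 y + c) =
  Eiter d p gamma j k x h1 - a * Eiter d p gamma j k x h2 + c.
Proof.
  destruct Hlaw as [_ Htot].
  induction k; intros j x a c h1 h2; simpl; auto.
  transitivity (lsum (signvecs d) (fun s =>
    p x s * Eiter d p gamma (S j) k (fun i => x i - gamma j * s i) h1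
    + (- a * (p x s * Eiter d p gamma (S j) k (fun i => x i - gamma j * s i) h2)
       + c * p x s))).
  - apply lsum_ext; intros s _; rewrite IHk; ring.
  - rewrite !lsum_plus, !lsum_scal, Htot; ring.
Qed.

Lemma Eiter_ge k j x c h : (forall y, c <= h y) -> c <= Eiter d p gamma j k x h.
Proof.
  intros H. rewrite <- (Eiter_const k j x c) at 1. apply Eiter_mono; exact H.
Qed.

End SignExpectation.

Lemma one_sub_div_le_ln_sub a b : 0 < a -> 0 < b -> 1 - a / b <= ln b - ln a.
Proof.
  intros Ha Hb.
  assert (Hab : 0 < a / b) by (apply Rdiv_lt_0_compat; lra).
  assert (Hln : 1 + ln (a / b) <= a / b)
    by (rewrite <- (exp_ln (a / b)) at 2 by exact Hab; apply exp_ineq1_le).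
  unfold Rdiv in Hln.
  rewrite ln_mult, ln_Rinv in Hln by (try apply Rinv_0_lt_compat; lra). lra.
Qed.

Lemma harmonic_le_1_add_ln K : (1 <= K)%nat ->
  fsum K (fun k => / (INR k + 1)) <= 1 + ln (INR K).
Proof.
  induction K as [|K IHK]; intros HK; [lia|].
  destruct (Nat.eq_dec K 0) as [->|HK0]; [simpl; rewrite ln_1; lra|].
  assert (HKpos : 0 < INR K) by (apply lt_0_INR; lia).
  pose proof (one_sub_div_le_ln_sub (INR K) (INR K + 1) HKpos ltac:(lra)).
  replace (1 - INR K / (INR K + 1)) with (/ (INR K + 1)) in H by (field; lra).
  simpl fsum; rewrite S_INR. specialize (IHK ltac:(lia)). lra.
Qed.

Lemma harmonic_le_3ln K : (2 <= K)%nat ->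
  fsum K (fun k => / (INR k + 1)) <= 3 * ln (INR K).
Proof.
  intros HK. pose proof (harmonic_le_1_add_ln K ltac:(lia)).
  assert (Hln2 : ln 2 <= ln (INR K)).
  { destruct (Nat.eq_dec K 2) as [->|HK2]; [right; f_equal; simpl; ring|].
    left; apply ln_increasing; [lra|].
    replace 2 with (INR 2) by reflexivity. apply lt_INR; lia. }
  pose proof ln_lt_2. lra.
Qed.

Lemma sum_decaying_steps_ge gamma0 K : 0 <= gamma0 ->
  gamma0 * sqrt (INR K) <= fsum K (fun k => gamma0 / sqrt (INR k + 1)).
Proof.
  intros Hg0. destruct K as [|K]; [simpl; rewrite sqrt_0; lra|].
  set (s := sqrt (INR (S K))).
  assert (Hs : 0 < s) by (apply sqrt_lt_R0, lt_0_INR; lia).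
  assert (Hss : s * s = INR (S K)) by (apply sqrt_sqrt, pos_INR).
  apply Rle_trans with (fsum (S K) (fun _ => gamma0 / s)).
  - rewrite fsum_const, <- Hss. right; field; lra.
  - apply fsum_le; intros k Hk. unfold Rdiv; apply Rmult_le_compat_l; [exact Hg0|].
    apply Rinv_le_contravar; [apply sqrt_lt_R0; pose proof (pos_INR k); lra|].
    apply sqrt_le_1_alt. rewrite <- S_INR. apply le_INR; lia.
Qed.

Lemma sum_sq_decaying_steps gamma0 K :
  fsum K (fun k => (gamma0 / sqrt (INR k + 1)) ^ 2)
  = gamma0 ^ 2 * fsum K (fun k => / (INR k + 1)).
Proof.
  rewrite <- fsum_scal. apply fsum_ext; intros k _.
  unfold Rdiv; rewrite Rpow_mult_distr, pow_inv, pow2_sqrt; [reflexivity|].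
  pose proof (pos_INR k); lra.
Qed.

Section SignSGD.

Variables (d : nat) (f : vec -> R) (g : vec -> vec) (L : nat -> R)
  (p : vec -> vec -> R) (fstar : R) (x0 : vec).
Hypothesis HL : forall i, (i < d)%nat -> 0 <= L i.
Hypothesis Hsmooth : forall x y : vec,
  f y <= f x + fsum d (fun i => g x i * (y i - x i))
             + fsum d (fun i => L i / 2 * (y i - x i) ^ 2).
Hypothesis Hlaw : sign_law d p.
Hypothesis Hbelow : forall x, fstar <= f x.

Lemma smooth_sign_step y s c : In s (signvecs d) ->
  f (fun i => y i - c * s i) <=
  f y - c * fsum d (fun i => g y i * s i) + c ^ 2 * (fsum d L / 2).
Proof.
  intros Hs.
  assert (Hlin : fsum d (fun i => g y i * (y i - c * s i - y i))
                 = - c * fsum d (fun i => g y i * s i)).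
  { rewrite <- fsum_scal; apply fsum_ext; intros; ring. }
  assert (Hquad : fsum d (fun i => L i / 2 * (y i - c * s i - y i) ^ 2)
                  <= c ^ 2 / 2 * fsum d L).
  { rewrite <- fsum_scal; apply fsum_le; intros i Hi.
    specialize (HL i Hi).
    destruct (signvecs_vals d s Hs i) as [e|[e|e]]; rewrite e; nra. }
  pose proof (Hsmooth y (fun i => y i - c * s i)) as Hxy; cbv beta in Hxy; lra.
Qed.

Lemma Eiter_one_step_le gamma j y : 0 <= gamma j ->
  Eiter d p gamma j 1 y f <=
  f y - gamma j * rho_norm d p g y + gamma j ^ 2 * (fsum d L / 2).
Proof.
  intros Hg. pose proof Hlaw as [Hp Htot]. set (c := gamma j) in *.
  change (Eiter d p gamma j 1 y f) with
    (lsum (signvecs d) (fun s => p y s * f (fun i => y i - c * s i))).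
  apply Rle_trans with (lsum (signvecs d) (fun s =>
    f y * p y s + (- c * (p y s * fsum d (fun i => g y i * s i))
                   + c ^ 2 * (fsum d L / 2) * p y s))).
  - apply lsum_le; intros s Hs.
    pose proof (smooth_sign_step y s c Hs). pose proof (Hp y s). nra.
  - rewrite !lsum_plus, !lsum_scal, Htot.
    pose proof (rho_norm_le_mean_inner d p Hlaw g y). nra.
Qed.

Lemma weighted_Egrad_sum_le gamma K :
  (forall k, 0 <= gamma k) ->
  fsum K (fun k => gamma k * Egrad d p g gamma x0 k) <=
  f x0 - Eiter d p gamma 0 K x0 f + fsum d L / 2 * fsum K (fun k => gamma k ^ 2).
Proof.
  intros Hg. induction K as [|K IHK]; cbn [fsum]; [simpl; lra|].
  assert (Hstep : Eiter d p gamma 0 (S K) x0 f <=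
    Eiter d p gamma 0 K x0 f - gamma K * Egrad d p g gamma x0 K
    + gamma K ^ 2 * (fsum d L / 2)).
  { rewrite Eiter_tower; simpl (0 + K)%nat.
    eapply Rle_trans.
    - apply Eiter_mono; [exact Hlaw|]. intros y. apply Eiter_one_step_le, Hg.
    - rewrite Eiter_affine by exact Hlaw. unfold Egrad; lra. }
  lra.
Qed.

Lemma weighted_Egrad_sum_le_gap gamma K : (forall k, 0 <= gamma k) ->
  fsum K (fun k => gamma k * Egrad d p g gamma x0 k) <=
  f x0 - fstar + fsum d L / 2 * fsum K (fun k => gamma k ^ 2).
Proof.
  intros Hg.
  pose proof (weighted_Egrad_sum_le gamma K Hg).
  pose proof (Eiter_ge d p Hlaw gamma K 0 x0 fstar f Hbelow). lra.
Qed.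

Lemma min_Egrad_decaying_steps_le gamma0 K : 0 < gamma0 -> (2 <= K)%nat ->
  Rmin_upto (K - 1) (Egrad d p g (fun k => gamma0 / sqrt (INR k + 1)) x0)
  <= (f x0 - fstar) / (gamma0 * sqrt (INR K))
     + 3 * gamma0 * (fsum d L / 2) * (ln (INR K) / sqrt (INR K)).
Proof.
  intros Hg0 HK. set (gam := fun k : nat => gamma0 / sqrt (INR k + 1)).
  assert (Hgam : forall k, 0 <= gam k).
  { intros k. unfold gam, Rdiv. apply Rmult_le_pos; [lra|].
    left; apply Rinv_0_lt_compat, sqrt_lt_R0. pose proof (pos_INR k); lra. }
  assert (HC : 0 <= fsum d L / 2).
  { assert (0 <= fsum d L); [|lra].
    rewrite <- (Rmult_0_r (INR d)), <- fsum_const. apply fsum_le, HL. }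
  assert (HlnK : 0 <= ln (INR K)).
  { rewrite <- ln_1. left; apply ln_increasing; [lra|].
    replace 1 with (INR 1) by reflexivity. apply lt_INR; lia. }
  assert (Hsqrt : 0 < sqrt (INR K)) by (apply sqrt_lt_R0, lt_0_INR; lia).
  assert (Hbound : Rmin_upto (K - 1) (Egrad d p g gam x0) * fsum K gam
                   <= f x0 - fstar + 3 * (fsum d L / 2) * gamma0 ^ 2 * ln (INR K)).
  { eapply Rle_trans; [apply Rmin_upto_mul_sum_le, Hgam|].
    eapply Rle_trans; [apply weighted_Egrad_sum_le_gap; eauto|].
    unfold gam; rewrite sum_sq_decaying_steps.
    apply Rplus_le_compat_l.
    apply Rle_trans with (fsum d L / 2 * (gamma0 ^ 2 * (3 * ln (INR K))));
      [|right; ring].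
    apply Rmult_le_compat_l; [exact HC|].
    apply Rmult_le_compat_l; [apply pow2_ge_0|apply harmonic_le_3ln, HK]. }
  replace ((f x0 - fstar) / (gamma0 * sqrt (INR K))
           + 3 * gamma0 * (fsum d L / 2) * (ln (INR K) / sqrt (INR K)))
    with ((f x0 - fstar + 3 * (fsum d L / 2) * gamma0 ^ 2 * ln (INR K))
          / (gamma0 * sqrt (INR K))) by (field; lra).
  apply Rle_div_of_mul_le with (fsum K gam);
    [|nra|apply sum_decaying_steps_ge; lra|exact Hbound].
  pose proof (Hbelow x0). assert (0 <= fsum d L / 2 * gamma0 ^ 2 * ln (INR K)); [|nra].
  apply Rmult_le_pos; [apply Rmult_le_pos; [exact HC|apply pow_le; lra]|exact HlnK].
Qed.

Lemma avg_Egrad_constant_step_le gamma K : 0 < gamma -> (1 <= K)%nat ->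
  / INR K * fsum K (Egrad d p g (fun _ => gamma) x0)
  <= (f x0 - fstar) / (gamma * INR K) + gamma * (fsum d L / 2).
Proof.
  intros Hg HK. assert (HK0 : 0 < INR K) by (apply lt_0_INR; lia).
  pose proof (weighted_Egrad_sum_le_gap (fun _ => gamma) K (fun _ => Rlt_le _ _ Hg))
    as Hsum.
  cbv beta in Hsum; rewrite fsum_scal, fsum_const in Hsum.
  replace (/ INR K * fsum K (Egrad d p g (fun _ => gamma) x0))
    with (gamma * fsum K (Egrad d p g (fun _ => gamma) x0) / (gamma * INR K))
    by (field; lra).
  replace ((f x0 - fstar) / (gamma * INR K) + gamma * (fsum d L / 2))
    with ((f x0 - fstar + fsum d L / 2 * (INR K * gamma ^ 2)) / (gamma * INR K))
    by (field; lra).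
  unfold Rdiv; apply Rmult_le_compat_r; [left; apply Rinv_0_lt_compat; nra|lra].
Qed.

End SignSGD.

Theorem theorem1 (d : nat) (f : vec -> R) (g : vec -> vec) (fstar : R)
  (L : nat -> R) (p : vec -> vec -> R) (x0 : vec)
  (Hf_dim : forall x y : vec, (forall i, (i < d)%nat -> x i = y i) -> f x = f y)
  (Hgrad : forall x i, (i < d)%nat ->
     derivable_pt_lim (fun t => f (upd x i (x i + t))) 0 (g x i))
  (Hbelow : forall x, fstar <= f x)
  (HL : forall i, (i < d)%nat -> 0 <= L i)
  (Hsmooth : forall x y : vec,
     f y <= f x + fsum d (fun i => g x i * (y i - x i))
                + fsum d (fun i => L i / 2 * (y i - x i) ^ 2))
  (Hlaw : sign_law d p)
  (Hspb : SPB d p g) :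
  let Lbar := / INR d * fsum d L in
  (forall gamma0 : R, 0 < gamma0 -> forall K : nat, (2 <= K)%nat ->
     Rmin_upto (K - 1) (Egrad d p g (fun k => gamma0 / sqrt (INR k + 1)) x0)
     <= (f x0 - fstar) / (gamma0 * sqrt (INR K))
        + 3 * gamma0 * INR d * Lbar / 2 * (ln (INR K) / sqrt (INR K)))
  /\
  (forall gamma : R, 0 < gamma -> forall K : nat, (1 <= K)%nat ->
     / INR K * fsum K (Egrad d p g (fun _ => gamma) x0)
     <= (f x0 - fstar) / (gamma * INR K) + gamma * INR d * Lbar / 2).
Proof.
  intros Lbar.
  assert (HdL : forall c, c * INR d * Lbar / 2 = c * (fsum d L / 2)).
  { intros c. unfold Lbar. rewrite <- (INR_mul_mean d L) at 2. unfold Rdiv; ring. }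
  split.
  - intros gamma0 Hg0 K HK. rewrite HdL.
    exact (min_Egrad_decaying_steps_le d f g L p fstar x0 HL Hsmooth Hlaw Hbelow
             gamma0 K Hg0 HK).
  - intros gamma Hg K HK. rewrite HdL.
    exact (avg_Egrad_constant_step_le d f g L p fstar x0 HL Hsmooth Hlaw Hbelow
             gamma K Hg HK).
Qed.
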